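(* Let $n\geq 3$ and $m\geq 1$. The matching $\mu$ on the face poset of $\Delta_m^{n,2}$ has no critical cells of dimension $0$ or $1$.
   Context: $\Delta_m^{n,2}=\mathrm{VR}(\{0,\ldots,m\}^n;2)$, where $\{0,\ldots,m\}^n$ carries the Manhattan metric $d(x,y)=\sum_i|x_i-y_i|$ and $\mathrm{VR}(X;r)$ is the complex of finite subsets of diameter $\leq r$. Order the vertices as $v_1\prec v_2\prec\cdots\prec v_N$ ($N=(m+1)^n$) in the anti-lexicographic order ($x\prec y$ iff at the largest index $i$ with $x_i\neq y_i$, $x_i<y_i$). Let $T_0$ be the set of all simplices of $\Delta_m^{n,2}$, including the empty simplex. For $i=1,\ldots,N$ put $S_i=\{\sigma\in T_{i-1}: v_i\notin\sigma,\ \sigma\cup\{v_i\}\in T_{i-1}\}$, $\mu(\sigma)=\sigma\cup\{v_i\}$ for $\sigma\in S_i$, and $T_i=T_{i-1}\setminus(S_i\cup\{\sigma\cup\{v_i\}:\sigma\in S_i\})$. The critical cells of $\mu$ are the simplices in $T_N$; the dimension of a simplex is its cardinality minus one. *)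

From mathcomp Require Import all_boot.
Set Implicit Arguments. Unset Strict Implicit. Unset Printing Implicit Defensive.

(* Vertices of {0,...,m}^n : functions 'I_n -> 'I_m.+1. *)
Definition vert (n m : nat) := {ffun 'I_n -> 'I_m.+1}.

(* Manhattan distance  sum_i |x_i - y_i|  (on nat: |a-b| = (a-b)+(b-a)). *)
Definition manhattan n m (x y : vert n m) : nat :=
  \sum_(i < n) ((x i - y i) + (y i - x i))%N.

(* Simplices of VR({0..m}^n; 2): finite vertex sets of diameter <= 2
   (the empty set included). *)
Definition is_simplex n m (s : {set vert n m}) : bool :=
  [forall x in s, forall y in s, manhattan x y <= 2].

Definition T0 n m : {set {set vert n m}} := [set s | is_simplex s].

Definition antilex n m (x y : vert n m) : bool :=
  [exists i : 'I_n, (x i < y i) && [forall j : 'I_n, (i < j) ==> (x j == y j)]].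

Definition antilex_le n m (x y : vert n m) : bool := (x == y) || antilex x y.

Definition vert_seq n m : seq (vert n m) := sort (@antilex_le n m) (enum (vert n m)).

Definition S_step n m (v : vert n m) (T : {set {set vert n m}}) : {set {set vert n m}} :=
  [set s in T | (v \notin s) && ((v |: s) \in T)].

Definition T_step n m (T : {set {set vert n m}}) (v : vert n m) : {set {set vert n m}} :=
  T :\: (S_step v T :|: [set v |: s | s in S_step v T]).

(* T_N : the set of critical cells of the matching mu. *)
Definition critical n m : {set {set vert n m}} := foldl (@T_step n m) (T0 n m) (vert_seq n m).

Definition sdim n m (s : {set vert n m}) : nat := #|s|.-1.

From mathcomp Require Import all_boot zify.
Set Implicit Arguments. Unset Strict Implicit. Unset Printing Implicit Defensive.

(* At step z, a simplex B with z \notin B is paired with z |: B as soon as both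
   are still present.  This is the case when z precedes every vertex of B and no
   earlier vertex w makes w |: B a simplex: then no earlier step touches B or
   z |: B.
   A vertex y <> 0 has an earlier neighbour (lower a positive coordinate), so
   [set y] is paired upwards, and the vertex 0 is paired with the empty simplex.
   For an edge x < y, either no vertex before x is a neighbour of y, and the edge
   is the partner of [set y] at step x, or x and y have an earlier common
   neighbour, and the edge is paired upwards.  Such a common neighbour is the
   coordinatewise minimum of x and y when x is not below y; otherwise it is x
   lowered by one at the last coordinate where an earlier neighbour of y
   differs from x, and, if d(x, y) = 2, raised by one at a smaller coordinate
   where it is below y. *)

Section AntilexOrder.
Variables n m : nat.
Implicit Types x y z w : vert n m.

Lemma antilexI x y (k : 'I_n) :
  x k < y k -> (forall j : 'I_n, k < j -> x j = y j) -> antilex x y.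
Proof.
move=> lt_k eq_above; apply/existsP; exists k; rewrite lt_k /=.
by apply/forallP=> j; apply/implyP=> /eq_above ->.
Qed.

Lemma antilexE x y :
  antilex x y -> exists2 k : 'I_n, x k < y k & forall j : 'I_n, k < j -> x j = y j.
Proof.
case/existsP=> k /andP[lt_k /forallP eq_above]; exists k => // j kj.
by apply/eqP; move/implyP: (eq_above j); apply.
Qed.

Lemma antilex_irr x : ~~ antilex x x.
Proof. by apply/negP=> /antilexE[k]; rewrite ltnn. Qed.

Lemma antilex_trans : transitive (@antilex n m).
Proof.
move=> y x z /antilexE[i lt_i eq_i] /antilexE[j lt_j eq_j].
case: (ltngtP i j) => [ij|ji|/val_inj eij].
- apply: (antilexI (k := j)); first by rewrite eq_i.
  by move=> k jk; rewrite eq_i ?eq_j // (ltn_trans ij jk).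
- apply: (antilexI (k := i)); first by rewrite -eq_j.
  by move=> k ik; rewrite eq_i ?eq_j // (ltn_trans ji ik).
- subst j; apply: (antilexI (k := i)); first exact: ltn_trans lt_j.
  by move=> k ik; rewrite eq_i ?eq_j.
Qed.

Lemma antilex_asym x y : antilex x y -> ~~ antilex y x.
Proof.
by move=> xy; apply/negP=> /(antilex_trans xy); rewrite (negbTE (antilex_irr x)).
Qed.

Lemma exists_last_diff x y : x != y ->
  exists2 k : 'I_n, x k != y k & forall j : 'I_n, k < j -> x j = y j.
Proof.
move=> nxy; have [i0 ne_i0] : exists i0, x i0 != y i0.
  by apply/existsP; apply: contraR nxy; rewrite negb_exists => /forallP eq_xy;
     apply/eqP/ffunP=> i; apply/eqP; rewrite -[_ == _]negbK eq_xy.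
case: (@arg_maxnP _ i0 (fun i => x i != y i) (fun i : 'I_n => i : nat) ne_i0)
  => k ne_k max_k.
exists k => // j kj; apply/eqP; apply: contraTT kj => /max_k; by rewrite -leqNgt.
Qed.

Lemma antilex_total x y : x != y -> antilex x y || antilex y x.
Proof.
move=> /exists_last_diff[k ne_k eq_above].
case: (ltngtP (x k) (y k)) => [lt|gt|/val_inj e]; last by rewrite e eqxx in ne_k.
- by rewrite (antilexI lt eq_above).
- by rewrite (antilexI gt) ?orbT // => j /eq_above ->.
Qed.

Lemma antilex_of_le x y : (forall i, x i <= y i) -> x != y -> antilex x y.
Proof.
move=> le_xy /exists_last_diff[k ne_k eq_above]; apply: (antilexI (k := k)) => //.
by rewrite ltn_neqAle le_xy andbT.
Qed.

Lemma antilex_le_refl : reflexive (@antilex_le n m).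
Proof. by move=> x; rewrite /antilex_le eqxx. Qed.

Lemma antilex_le_trans : transitive (@antilex_le n m).
Proof.
move=> y x z /orP[/eqP->//|xy] /orP[/eqP<-|yz]; rewrite /antilex_le ?xy ?orbT //.
by rewrite (antilex_trans xy yz) orbT.
Qed.

Lemma antilex_le_total : total (@antilex_le n m).
Proof.
move=> x y; rewrite /antilex_le; case: (eqVneq x y) => [->|/antilex_total] //=.
Qed.

Definition vrank x := index x (vert_seq n m).

Lemma mem_vert_seq x : x \in vert_seq n m.
Proof. by rewrite mem_sort mem_enum. Qed.

Lemma vrank_ltE x y : (vrank x < vrank y) = antilex x y.
Proof.
have sorted_vs := sort_sorted antilex_le_total (enum (vert n m)).
have mem_vs := mem_vert_seq.
apply/idP/idP => [lt_xy|xy].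
- have /orP[/eqP eq_xy|//] :=
    sorted_ltn_index antilex_le_trans sorted_vs _ _ (mem_vs x) (mem_vs y) lt_xy.
  by rewrite eq_xy ltnn in lt_xy.
- rewrite ltnNge; apply/negP=> le_yx.
  have /orP[/eqP eq_yx|yx] := sorted_leq_index antilex_le_trans antilex_le_refl
    sorted_vs _ _ (mem_vs y) (mem_vs x) le_yx.
  + by move: xy; rewrite eq_yx (negbTE (antilex_irr x)).
  + by move: (antilex_asym xy); rewrite yx.
Qed.

End AntilexOrder.

Section Matching.
Variables n m : nat.
Implicit Types (x y z w : vert n m) (B C : {set vert n m}) (T : {set {set vert n m}}).

Lemma foldl_T_step_subset T q : foldl (@T_step n m) T q \subset T.
Proof.
elim: q T => [|v q IHq] T /=; first exact: subxx.
exact: subset_trans (IHq _) (subsetDl _ _).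
Qed.

Lemma critical_T0 B : B \in critical n m -> B \in T0 n m.
Proof. exact: subsetP (foldl_T_step_subset _ _) B. Qed.

Lemma mem_foldl_T_step T q B : B \in T ->
  (forall w, w \in q -> w \notin B) -> (forall w, w \in q -> w |: B \notin T) ->
  B \in foldl (@T_step n m) T q.
Proof.
elim: q T => [|v q IHq] //= T BT notin_B not_cone.
have vq : v \in v :: q := mem_head v q.
apply: IHq => [|w wq|w wq].
- rewrite !inE BT andbT negb_or (negbTE (not_cone v vq)) !andbF /=.
  by apply: contra (notin_B v vq) => /imsetP[C _ ->]; rewrite setU11.
- by apply: notin_B; rewrite inE wq orbT.
- have wvq : w \in v :: q by rewrite inE wq orbT.
  by apply: contra (not_cone w wvq) => /setDP[].
Qed.

Lemma T_step_removes_pair T z B : B \in T -> z \notin B -> z |: B \in T ->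
  B \notin T_step T z /\ z |: B \notin T_step T z.
Proof.
move=> BT zB zBT; have BS : B \in S_step z T by rewrite inE BT zB zBT.
have zBimg : z |: B \in [set z |: C | C in S_step z T] by apply/imsetP; exists B.
by split; rewrite in_setD in_setU ?BS ?zBimg ?orbT.
Qed.

Lemma simplexP B :
  reflect (forall x y, x \in B -> y \in B -> manhattan x y <= 2) (is_simplex B).
Proof.
apply: (iffP forallP) => [dB x y xB yB|dB x]; last first.
  by apply/implyP=> xB; apply/forallP=> y; apply/implyP; apply: dB.
by move/implyP: (dB x) => /(_ xB) /forallP /(_ y) /implyP; apply.
Qed.

Lemma T0_subset B C : B \subset C -> C \in T0 n m -> B \in T0 n m.
Proof.
rewrite !inE => /subsetP BC /simplexP dC; apply/simplexP=> x y xB yB.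
by apply: dC; apply: BC.
Qed.

Lemma matched_not_critical z B : z \notin B -> z |: B \in T0 n m ->
  (forall b, b \in B -> vrank z < vrank b) ->
  (forall w, vrank w < vrank z -> w |: B \notin T0 n m) ->
  B \notin critical n m /\ z |: B \notin critical n m.
Proof.
move=> zB zBT z_first no_cone.
have BT : B \in T0 n m by apply: T0_subset zBT; apply: subsetUr.
pose before := take (vrank z) (vert_seq n m).
have before_lt w : w \in before -> vrank w < vrank z by apply: index_ltn.
have vs : vert_seq n m = before ++ z :: drop (vrank z).+1 (vert_seq n m).
  rewrite -[LHS](cat_take_drop (vrank z)) (drop_nth z) ?index_mem ?mem_vert_seq //.
  by rewrite nth_index ?mem_vert_seq.
have notin_B w : w \in before -> w \notin B.
  by move/before_lt=> wz; apply: contraL wz => /z_first zw; rewrite -leqNgt ltnW.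
have notin_zB w : w \in before -> w \notin z |: B.
  move=> wb; rewrite in_setU1 negb_or notin_B // andbT.
  by apply: contraTneq (before_lt w wb) => ->; rewrite ltnn.
have no_cone_zB w : w \in before -> w |: (z |: B) \notin T0 n m.
  move/before_lt/no_cone; apply: contra; apply: T0_subset.
  by rewrite setUCA subsetUr.
have [] := T_step_removes_pair
  (mem_foldl_T_step BT notin_B (fun w wb => no_cone w (before_lt w wb)))
  zB (mem_foldl_T_step zBT notin_zB no_cone_zB).
rewrite /critical vs foldl_cat /= => B_out zB_out.
by split; [apply: contra B_out | apply: contra zB_out];
  apply: (subsetP (foldl_T_step_subset _ _)).
Qed.

Lemma face_not_critical w B : w \notin B -> w |: B \in T0 n m ->
  (forall b, b \in B -> vrank w < vrank b) -> B \notin critical n m.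
Proof.
move=> wB wBT w_first; pose cone v := (v \notin B) && (v |: B \in T0 n m).
have cone_w : cone w by rewrite /cone wB wBT.
case: (@arg_minnP _ w cone (@vrank n m) cone_w) => z /andP[zB zBT] z_min.
apply: (proj1 (matched_not_critical zB zBT _ _)) => [b bB|v vz].
  exact: leq_ltn_trans (z_min w cone_w) (w_first b bB).
apply: contraTN vz => vBT; rewrite -leqNgt.
have [vB|vB] := boolP (v \in B); last by apply: z_min; rewrite /cone vB vBT.
exact: ltnW (leq_ltn_trans (z_min w cone_w) (w_first v vB)).
Qed.

End Matching.

Lemma ord_pred_exists p (a : 'I_p.+1) : 0 < a -> exists b : 'I_p.+1, b.+1 = a.
Proof. by move=> a_gt0; exists (inord a.-1); rewrite inordK; have := ltn_ord a; lia. Qed.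

Lemma ord_succ_exists p (a b : 'I_p.+1) : a < b -> exists c : 'I_p.+1, c = a.+1 :> nat.
Proof. by move=> ab; exists (inord a.+1); rewrite inordK; have := ltn_ord b; lia. Qed.

Section Geometry.
Variables n m : nat.
Implicit Types (x y z w : vert n m) (h i j k : 'I_n) (a : 'I_m.+1).

Local Notation dist a b := ((a - b) + (b - a))%N.

Lemma manhattan_xx x : manhattan x x = 0.
Proof. by rewrite /manhattan big1 // => i _; rewrite subnn. Qed.

Lemma manhattanC x y : manhattan x y = manhattan y x.
Proof. by apply: eq_bigr => i _; rewrite addnC. Qed.

Lemma manhattan_triangle x y z : manhattan x z <= manhattan x y + manhattan y z.
Proof. by rewrite /manhattan -big_split; apply: leq_sum => i _ /=; lia. Qed.

Definition vupd x k a : vert n m :=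
  [ffun j => if j == k then a else x j].

Lemma vupd_same x k a : vupd x k a k = a.
Proof. by rewrite ffunE eqxx. Qed.

Lemma vupd_other x k a j : j != k -> vupd x k a j = x j.
Proof. by rewrite ffunE => /negbTE ->. Qed.

Lemma manhattan_vupd x y k a :
  manhattan (vupd x k a) y + dist (x k) (y k) = manhattan x y + dist a (y k).
Proof.
rewrite /manhattan (bigD1 k) //= [in RHS](bigD1 k) //= vupd_same.
rewrite addnAC [RHS]addnAC [dist (x k) _ + _]addnC; congr (_ + _).
by apply: eq_bigr => j /vupd_other ->.
Qed.

Lemma antilex_vupd x k a : a < x k -> antilex (vupd x k a) x.
Proof.
move=> lt_a; apply: (antilexI (k := k)) => [|j kj]; first by rewrite vupd_same.
by rewrite vupd_other // neq_ltn kj orbT.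
Qed.

Definition vmin x y : vert n m := [ffun j => if x j <= y j then x j else y j].

Lemma manhattan_vmin x y :
  manhattan (vmin x y) x + manhattan (vmin x y) y = manhattan x y.
Proof.
rewrite /manhattan -big_split; apply: eq_bigr => j _ /=.
by rewrite ffunE; case: (leqP (x j) (y j)); lia.
Qed.

Lemma antilex_vmin x y k : y k < x k -> antilex (vmin x y) x.
Proof.
move=> lt_k; apply: antilex_of_le => [j|].
  by rewrite ffunE; case: (leqP (x j) (y j)) => // /ltnW.
apply/eqP=> /ffunP/(_ k); rewrite ffunE; case: (leqP (x k) (y k)) => [|_ eq_k].
  by rewrite leqNgt lt_k.
by rewrite eq_k ltnn in lt_k.
Qed.

Lemma lower_neighbor x k : 0 < x k -> exists2 z, antilex z x & manhattan z x = 1.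
Proof.
move=> /ord_pred_exists[a ea]; exists (vupd x k a); first by apply: antilex_vupd; lia.
by have := manhattan_vupd x x k a; rewrite manhattan_xx; lia.
Qed.

Lemma exists_lower_gap x y w h :
  (forall j, x j <= y j) -> w h < x h -> (forall j, h < j -> w j = x j) ->
  manhattan w y <= manhattan x y -> exists2 i : 'I_n, i < h & x i < y i.
Proof.
move=> le_xy lt_h eq_above le_wy.
have [/existsP[i /andP[ih lt_i]]|/existsPn no_gap] :=
  boolP [exists i : 'I_n, (i < h) && (x i < y i)]; first by exists i.
suff : manhattan x y < manhattan w y by rewrite ltnNge le_wy.
rewrite /manhattan (bigD1 h) //= [X in _ < X](bigD1 h) //= -addSn.
apply: leq_add; first by have := le_xy h; lia.
apply: leq_sum => j /negbTE ne_jh; case: (ltngtP j h) => [jh|hj|/val_inj eq_jh].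
- by move: (no_gap j) (le_xy j); rewrite jh /= -leqNgt; lia.
- by rewrite eq_above.
- by rewrite eq_jh eqxx in ne_jh.
Qed.

Lemma le_common_neighbor x y w : (forall j, x j <= y j) -> x != y ->
  manhattan x y <= 2 -> antilex w x -> manhattan w y <= 2 ->
  exists2 z, antilex z x & manhattan z x <= 2 /\ manhattan z y <= 2.
Proof.
move=> le_xy nxy d_xy /antilexE[h lt_h eq_above] d_wy.
have [a ea] : exists a : 'I_m.+1, a.+1 = x h by apply: ord_pred_exists; lia.
have d_z0x : manhattan (vupd x h a) x = 1.
  by have := manhattan_vupd x x h a; rewrite manhattan_xx; lia.
have d_z0y := manhattan_vupd x y h a.
set z0 := vupd x h a in d_z0x d_z0y *.
have [d1|d2] := leqP (manhattan x y) 1.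
  exists z0; first by apply: antilex_vupd; lia.
  by have := manhattan_triangle z0 x y; split; lia.
have [i ih lt_i] := exists_lower_gap le_xy lt_h eq_above (leq_trans d_wy d2).
have [b eb] := ord_succ_exists lt_i.
have ne_ih : i != h by rewrite neq_ltn ih.
have z0_i : z0 i = x i by rewrite /z0 vupd_other.
exists (vupd z0 i b).
  apply: (antilexI (k := h)) => [|j hj].
    by rewrite vupd_other 1?eq_sym // /z0 vupd_same; lia.
  have ne_jh : j != h by rewrite neq_ltn hj orbT.
  have ne_ji : j != i by rewrite neq_ltn (ltn_trans ih hj) orbT.
  by rewrite /z0 !vupd_other.
have := manhattan_vupd z0 x i b; have := manhattan_vupd z0 y i b.
by rewrite z0_i; have := le_xy h; lia.
Qed.

Lemma common_neighbor_before x y w : antilex x y -> manhattan x y <= 2 ->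
  antilex w x -> manhattan w y <= 2 ->
  exists2 z, antilex z x & manhattan z x <= 2 /\ manhattan z y <= 2.
Proof.
move=> xy d_xy.
have [/forallP le_xy|/forallPn[k]] := boolP [forall j, x j <= y j].
  apply: le_common_neighbor => //.
  by apply: contraTneq xy => ->; apply: antilex_irr.
rewrite -ltnNge => lt_k _ _; exists (vmin x y); first exact: antilex_vmin lt_k.
by have := manhattan_vmin x y; lia.
Qed.

End Geometry.

Section LowDimensionalCells.
Variables n m : nat.
Implicit Types (x y z w b : vert n m) (B : {set vert n m}).

Lemma T0_set1 x : [set x] \in T0 n m.
Proof.
by rewrite inE; apply/simplexP=> a b /set1P-> /set1P->; rewrite manhattan_xx.
Qed.

Lemma T0_setU1 z B : B \in T0 n m ->
  (forall b, b \in B -> manhattan z b <= 2) -> z |: B \in T0 n m.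
Proof.
rewrite !inE => /simplexP dB dz; apply/simplexP=> a b.
case/setU1P=> [->|aB] /setU1P[->|bB]; first by rewrite manhattan_xx.
- exact: dz.
- by rewrite manhattanC; apply: dz.
- exact: dB.
Qed.

Lemma T0_manhattan B x y : B \in T0 n m -> x \in B -> y \in B -> manhattan x y <= 2.
Proof. by rewrite inE => /simplexP; apply. Qed.

Lemma vertex_not_critical y : [set y] \notin critical n m.
Proof.
have [/existsP[k yk]|/existsPn y0] := boolP [exists k, 0 < y k].
  have [w wy d_wy] := lower_neighbor yk.
  apply: (face_not_critical (w := w)) => [|| b /set1P->]; last by rewrite vrank_ltE.
    by apply: contraTN wy => /set1P->; apply: antilex_irr.
  by apply: T0_setU1 (T0_set1 y) _ => b /set1P->; rewrite d_wy.
have no_cone w : vrank w < vrank y -> w |: set0 \notin T0 n m.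
  rewrite vrank_ltE => wy; have yw : antilex y w.
    apply: antilex_of_le => [j|]; first by move: (y0 j); rewrite -eqn0Ngt => /eqP->.
    by apply: contraTneq wy => ->; apply: antilex_irr.
  by move: (antilex_asym wy); rewrite yw.
have T0_y : y |: set0 \in T0 n m by rewrite setU0 T0_set1.
have y_out : y \notin set0 by rewrite in_set0.
have B_after b : b \in set0 -> vrank y < vrank b by rewrite in_set0.
have [_] := matched_not_critical y_out T0_y B_after no_cone.
by rewrite setU0.
Qed.

Lemma edge_not_critical x y : antilex x y -> manhattan x y <= 2 ->
  [set x; y] \notin critical n m.
Proof.
move=> xy d_xy; have T0_xy : [set x; y] \in T0 n m.
  by apply: T0_setU1 (T0_set1 y) _ => b /set1P->.
have [/existsP[w /andP[wx d_wy]]|no_nb] :=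
  boolP [exists w, antilex w x && (manhattan w y <= 2)].
  have [z zx [d_zx d_zy]] := common_neighbor_before xy d_xy wx d_wy.
  have zy := antilex_trans zx xy.
  apply: (face_not_critical (w := z)) => [|| b /set2P[]->]; rewrite ?vrank_ltE //.
    by apply/set2P=> -[] ez; [move: zx | move: zy]; rewrite ez (negbTE (antilex_irr _)).
  by apply: T0_setU1 T0_xy _ => b /set2P[]->.
have := proj2 (matched_not_critical (z := x) (B := [set y]) _ _ _ _); apply => //.
- by apply: contraTN xy => /set1P->; apply: antilex_irr.
- by move=> b /set1P->; rewrite vrank_ltE.
- move=> w; rewrite vrank_ltE => wx; apply: contraNN no_nb => T0_wy.
  by apply/existsP; exists w; rewrite wx (T0_manhattan T0_wy (set21 w y) (set22 w y)).
Qed.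

End LowDimensionalCells.

Theorem lemma4p8 (n m : nat) : 3 <= n -> 1 <= m ->
  forall s : {set vert n m}, s \in critical n m -> #|s| != 1 /\ #|s| != 2.
Proof.
move=> _ _ s s_crit; split.
  by apply/cards1P=> -[y s_y]; rewrite s_y (negbTE (vertex_not_critical y)) in s_crit.
apply/cards2P=> -[x [y [nxy s_xy]]]; rewrite s_xy in s_crit.
have d_xy := T0_manhattan (critical_T0 s_crit) (set21 x y) (set22 x y).
case/orP: (antilex_total nxy) => [xy|yx].
  by rewrite (negbTE (edge_not_critical xy d_xy)) in s_crit.
rewrite setUC manhattanC in s_crit d_xy.
by rewrite (negbTE (edge_not_critical yx d_xy)) in s_crit.
Qed.
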